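(* Let $p\in[1,\infty)$, $w$ a weight sequence, and let $A\subset L_{p,w}$ be such that for every $\varepsilon>0$ there is $n\in\mathbb{N}$ with $\|a\|_{p,w}^p-S_n(a)<\varepsilon$ for all $a\in A$; for $\varepsilon>0$ let $n(\varepsilon)$ denote the least such $n$. If there exists $m\in\mathbb{N}$ such that $n(\varepsilon)\le m$ for all $\varepsilon>0$, then $A-A=\{a-b:a,b\in A\}$ is equinormed with respect to $\{\|\cdot\|_{p,w,i}\}_{i\in\mathbb{N}}$.
   Context: A weight sequence is a sequence $w=(w_i)$ of positive reals with $w_1=1\ge w_2\ge\dots$, $w_i\to0$, and $\sum_i w_i=+\infty$. For a real sequence $a$, $\|a\|_{p,w}=\sup_{\sigma}\big(\sum_{i=1}^\infty |a_{\sigma_i}|^p w_i\big)^{1/p}$ over all permutations $\sigma$ of $\mathbb{N}$, and $L_{p,w}$ is the set of real sequences with finite $\|\cdot\|_{p,w}$. For $i\in\mathbb{N}$, $\|a\|_{p,w,i}=\|(a_1,\dots,a_i,0,0,\dots)\|_{p,w}$ and $S_i(a)=\|a\|_{p,w,i}^p$. A set $B\subset L_{p,w}$ is equinormed if $\forall\varepsilon>0\ \exists i\ \forall x\in B:\ \|x\|_{p,w}\le\|x\|_{p,w,i}+\varepsilon$. *)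

(* Sequences are indexed from 0: a 0 is a_1 of the paper. *)
From mathcomp Require Import all_boot all_order all_algebra.
From mathcomp Require Import all_classical all_reals all_analysis.
Set Implicit Arguments. Unset Strict Implicit. Unset Printing Implicit Defensive.
Import Order.TTheory GRing.Theory Num.Theory.
Local Open Scope ring_scope.
Local Open Scope classical_set_scope.

Definition weight_seq (R : realType) (w : nat -> R) : Prop :=
  [/\ w 0%N = 1,
      (forall i, 0 < w i),
      (forall i, w i.+1 <= w i),
      w n @[n --> \oo] --> (0 : R^o)
    & (\sum_(0 <= i <oo) (w i)%:E = +oo)%E].

Definition lpw_pow (R : realType) (p : R) (w : nat -> R) (a : nat -> R) : \bar R :=
  ereal_sup [set s | exists sigma : nat -> nat, bijective sigma /\
     s = (\sum_(0 <= i <oo) ((`|a (sigma i)| `^ p * w i)%:E))%E].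

Definition lpw_norm (R : realType) (p : R) (w : nat -> R) (a : nat -> R) : \bar R :=
  poweR (lpw_pow p w a) p^-1.

Definition trunc (R : realType) (i : nat) (a : nat -> R) : nat -> R :=
  fun k => if (k < i)%N then a k else 0.

Definition lpw_norm_i (R : realType) (p : R) (w : nat -> R) (i : nat) (a : nat -> R) : \bar R :=
  lpw_norm p w (trunc i a).

Definition S_ (R : realType) (p : R) (w : nat -> R) (i : nat) (a : nat -> R) : \bar R :=
  lpw_pow p w (trunc i a).

Definition in_Lpw (R : realType) (p : R) (w : nat -> R) (a : nat -> R) : Prop :=
  (lpw_pow p w a < +oo)%E.

Definition equinormed (R : realType) (p : R) (w : nat -> R) (B : set (nat -> R)) : Prop :=
  forall eps : R, 0 < eps -> exists i : nat, forall x, B x ->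
    (lpw_norm p w x <= lpw_norm_i p w i x + eps%:E)%E.

Definition diffset (R : realType) (A : set (nat -> R)) : set (nat -> R) :=
  [set x | exists a b, A a /\ A b /\ x = (fun k => a k - b k)].

From mathcomp Require Import all_boot all_order all_algebra.
From mathcomp Require Import all_classical all_reals all_analysis.
Import Order.TTheory GRing.Theory Num.Theory.
Local Open Scope ring_scope.
Local Open Scope classical_set_scope.

(* Every a in A vanishes from index m on.  Indeed, n(eps) <= m and S_n <= S_m
   give ||a||^p - S_m(a) < eps for every eps > 0, so ||a||^p = S_m(a).  On the
   other hand a nonzero entry a_k with k >= m can always be placed, by a
   permutation, at a position j <= m that a given rearrangement of the
   truncation leaves empty, so that ||a||^p >= S_m(a) + |a_k|^p w_m.  Hence the
   differences a - b of elements of A vanish from m on as well, coincide with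
   their m-th truncations, and A - A is equinormed with i = m. *)

Lemma injective_nat_ge [s : nat -> nat] m : injective s ->
  exists2 j, (j <= m)%N & (m <= s j)%N.
Proof.
move=> s_inj.
have /existsP[j m_le_sj] : [exists j : 'I_m.+1, m <= s j]%N.
  apply/existsPn => /= small.
  have lt_m (j : 'I_m.+1) : (s j < m)%N by rewrite ltnNge small.
  have f_inj : injective (fun j => Ordinal (lt_m j)).
    by move=> i k /(congr1 val) /s_inj /val_inj.
  by have := leq_card _ f_inj; rewrite !card_ord ltnn.
by exists j; rewrite // -ltnS.
Qed.

Lemma ex_le_of_least_le [P : nat -> Prop] [m : nat] : (exists n, P n) ->
  (forall n, P n -> (forall k, P k -> (n <= k)%N) -> (n <= m)%N) ->
  exists2 n, (n <= m)%N & P n.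
Proof.
move=> exP least_le.
have exPb : exists n, `[< P n >] by have [n Pn] := exP; exists n; exact/asboolP.
case: (ex_minnP exPb) => n /asboolP Pn n_min.
by exists n => //; apply: least_le => // k Pk; apply/n_min/asboolP.
Qed.

Definition swapn (j l i : nat) : nat := if i == j then l else if i == l then j else i.

Lemma swapnK j l : involutive (swapn j l).
Proof.
move=> i; rewrite /swapn; case: (eqVneq i j) => [->|ij].
  by rewrite eqxx; case: (eqVneq l j) => [->|]; rewrite ?eqxx.
case: (eqVneq i l) => [->|il]; first by rewrite eqxx.
by rewrite (negbTE ij) (negbTE il).
Qed.

Lemma nneseries_le_bump [R : realType] [f g : nat -> \bar R] [c : \bar R] j :
  (forall i, 0 <= f i)%E -> (0 <= c)%E ->
  (forall i, i != j -> f i <= g i)%E -> (f j + c <= g j)%E ->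
  (\sum_(0 <= i <oo) f i + c <= \sum_(0 <= i <oo) g i)%E.
Proof.
move=> f_ge0 c_ge0 fg fg_j.
pose h i := if i == j then c else 0%E.
have h_ge0 i : (0 <= h i)%E by rewrite /h; case: ifP.
have c_le_h : (c <= \sum_(0 <= i <oo) h i)%E.
  apply: le_trans (nneseries_lim_ge j.+1 (fun i _ _ => h_ge0 i)).
  rewrite big_nat_recr //= big1_seq ?add0e /h ?eqxx // => i.
  by rewrite mem_index_iota => /andP[_ /ltn_eqF ->].
apply: le_trans (leeD2l _ c_le_h) _.
rewrite -nneseriesD //; apply: lee_nneseries => [i _ _|i _].
  exact: adde_ge0.
by rewrite /h; case: (eqVneq i j) => [->|/fg]; rewrite ?adde0.
Qed.

Lemma trunc_ge {R : realType} m k (a : nat -> R) : (m <= k)%N -> trunc m a k = 0.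
Proof. by rewrite /trunc ltnNge => ->. Qed.

Lemma normr_trunc_le {R : realType} m k (a : nat -> R) : `|trunc m a k| <= `|a k|.
Proof. by rewrite /trunc; case: ifP; rewrite ?normr0. Qed.

Lemma truncB {R : realType} m (a b : nat -> R) :
  trunc m (fun k => a k - b k) = (fun k => trunc m a k - trunc m b k).
Proof. by apply: funext => k; rewrite /trunc; case: ifP; rewrite ?subr0. Qed.

Section LpwPow.
Context {R : realType} {p : R} {w : nat -> R}.
Hypothesis w_ge0 : forall i, 0 <= w i.

Local Notation term x i := ((`|x : R| `^ p * w i)%:E).

Lemma term_ge0 x i : (0 <= term x i)%E.
Proof. by rewrite lee_fin mulr_ge0 ?powR_ge0. Qed.

Lemma lpw_pow_ge0 a : (0 <= lpw_pow p w a)%E.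
Proof.
apply: le_ereal_sup_tmp; exists (\sum_(0 <= i <oo) term (a i) i)%E.
  by exists id; split => //; exact: (@inv_bij _ id).
by apply: nneseries_ge0 => i _ _; exact: term_ge0.
Qed.

Hypothesis p_ge0 : 0 <= p.

Lemma le_term x y i : `|x| <= `|y| -> (term x i <= term y i)%E.
Proof. by move=> xy; rewrite lee_fin ler_wpM2r // ge0_ler_powR ?nnegrE. Qed.

Lemma le_lpw_pow a b : (forall k, `|b k| <= `|a k|) ->
  (lpw_pow p w b <= lpw_pow p w a)%E.
Proof.
move=> ba; apply/ereal_supP => _ [s [s_bij ->]].
apply: le_ereal_sup_tmp; exists (\sum_(0 <= i <oo) term (a (s i)) i)%E.
  by exists s.
by apply: lee_nneseries => [i _ _|i _]; [exact: term_ge0 | exact: le_term].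
Qed.

Lemma S_le_lpw_pow m a : (S_ p w m a <= lpw_pow p w a)%E.
Proof. by apply: le_lpw_pow => k; exact: normr_trunc_le. Qed.

Lemma S_nondecreasing n m a : (n <= m)%N -> (S_ p w n a <= S_ p w m a)%E.
Proof.
move=> nm; apply: le_lpw_pow => k; rewrite /trunc.
by case: ifP => [kn|_]; rewrite ?(leq_trans kn nm) ?normr0.
Qed.

Lemma fin_num_S m a : in_Lpw p w a -> S_ p w m a \is a fin_num.
Proof.
move=> a_Lpw; rewrite ge0_fin_numE; last exact: lpw_pow_ge0.
exact: le_lt_trans (S_le_lpw_pow m a) a_Lpw.
Qed.

Hypothesis p_neq0 : p != 0.
Hypothesis w_noninc : forall i, w i.+1 <= w i.

(* The rearrangement s \o swapn j (s^-1 k) moves a_k to a position j <= m that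
   the rearrangement s of the m-th truncation leaves empty. *)
Lemma series_trunc_add_term_le a s m k : (m <= k)%N -> bijective s ->
  (\sum_(0 <= i <oo) term (trunc m a (s i)) i + term (a k) m <= lpw_pow p w a)%E.
Proof.
move=> mk s_bij; have [j jm mj] := injective_nat_ge m (bij_inj s_bij).
case: (s_bij) => g sK gK; pose t := swapn j (g k).
apply: le_ereal_sup_tmp; exists (\sum_(0 <= i <oo) term (a (s (t i))) i)%E.
  by exists (s \o t); split => //; apply: bij_comp => //; exact: inv_bij (swapnK _ _).
apply: (nneseries_le_bump j) => [i||i ij|]; rewrite ?term_ge0 //.
  rewrite /t /swapn (negbTE ij); case: (eqVneq i (g k)) => [->|_].
    by rewrite gK trunc_ge // normr0 powR0 // mul0r term_ge0.
  exact/le_term/normr_trunc_le.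
rewrite /t /swapn eqxx gK trunc_ge // normr0 powR0 // mul0r add0e.
by rewrite lee_fin ler_wpM2l ?powR_ge0 // (nonincreasing_seqP w).1.
Qed.

Lemma S_add_term_le_lpw_pow a [m k : nat] : (m <= k)%N ->
  (S_ p w m a + term (a k) m <= lpw_pow p w a)%E.
Proof.
move=> mk; case La: (lpw_pow p w a) => [r| |]; first last.
- by have := lpw_pow_ge0 a; rewrite La.
- exact: leey.
rewrite -leeBrDr //; apply/ereal_supP => _ [s [s_bij ->]].
by rewrite leeBrDr // -La; exact: series_trunc_add_term_le.
Qed.

Hypothesis w_gt0 : forall i, 0 < w i.

Lemma trunc_id_of_lpw_pow_le_S [a : nat -> R] [m : nat] : in_Lpw p w a ->
  (lpw_pow p w a <= S_ p w m a)%E -> trunc m a = a.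
Proof.
move=> a_Lpw a_le_S; apply: funext => k; rewrite /trunc; case: ltnP => // mk.
have := le_trans (S_add_term_le_lpw_pow a mk) a_le_S.
rewrite -[leRHS]adde0 leeD2lE ?fin_num_S // lee_fin pmulr_lle0 // => pow_le0.
apply/esym/eqP; have := powR_eq0 `|a k| p; rewrite p_neq0 andbT normr_eq0 => <-.
by rewrite eq_le pow_le0 powR_ge0.
Qed.

Lemma lpw_pow_le_S_of_small_tails [a : nat -> R] [m : nat] : in_Lpw p w a ->
  (forall eps, 0 < eps ->
     exists2 n, (n <= m)%N & (lpw_pow p w a - S_ p w n a < eps%:E)%E) ->
  (lpw_pow p w a <= S_ p w m a)%E.
Proof.
move=> a_Lpw tail_small; apply/lee_addgt0Pr => eps eps_gt0.
have [n nm] := tail_small eps eps_gt0.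
rewrite lteBlDr ?fin_num_S // => /ltW /le_trans; apply.
by rewrite addeC; apply: leeD2r; exact: S_nondecreasing.
Qed.

End LpwPow.

Lemma equinormed_of_trunc_id {R : realType} [p : R] [w : nat -> R]
    [B : set (nat -> R)] i :
  (forall x, B x -> trunc i x = x) -> equinormed p w B.
Proof.
move=> B_trunc eps eps_gt0; exists i => x Bx.
by rewrite /lpw_norm_i B_trunc // leeDl // lee_fin ltW.
Qed.

Theorem mainTheorem8 (R : realType) (p : R) (w : nat -> R) (A : set (nat -> R)) :
  1 <= p ->
  weight_seq w ->
  (forall a, A a -> in_Lpw p w a) ->
  (* for every eps > 0 there is n with ||a||^p - S_n(a) < eps for all a in A *)
  (forall eps : R, 0 < eps -> exists n : nat, forall a, A a ->
     (lpw_pow p w a - S_ p w n a < eps%:E)%E) ->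
  (* the least such n, n(eps), is bounded by some m uniformly in eps *)
  (exists m : nat, forall eps : R, 0 < eps -> forall n : nat,
     (forall a, A a -> (lpw_pow p w a - S_ p w n a < eps%:E)%E) ->
     (forall k : nat, (forall a, A a -> (lpw_pow p w a - S_ p w k a < eps%:E)%E) ->
        (n <= k)%N) ->
     (n <= m)%N) ->
  equinormed p w (diffset A).
Proof.
move=> p_ge1 [_ w_gt0 w_noninc _ _] A_Lpw tail_small [m least_le].
have p_gt0 : 0 < p by apply: lt_le_trans p_ge1.
have w_ge0 i : 0 <= w i by exact/ltW.
have A_trunc a : A a -> trunc m a = a.
  move=> Aa; have a_Lpw := A_Lpw a Aa.
  apply: (trunc_id_of_lpw_pow_le_S w_ge0 (ltW p_gt0) (lt0r_neq0 p_gt0) w_noninc w_gt0 a_Lpw).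
  apply: (lpw_pow_le_S_of_small_tails w_ge0 (ltW p_gt0) a_Lpw) => eps eps_gt0.
  have [n nm tail_n] := ex_le_of_least_le (tail_small eps eps_gt0) (least_le eps eps_gt0).
  by exists n => //; exact: tail_n.
apply: (equinormed_of_trunc_id m) => _ [a [b [Aa [Ab ->]]]].
by rewrite truncB !A_trunc.
Qed.
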